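(* Let $(X,d)\in\mathfrak U$. Then for every $r\in\operatorname{Sp}(X)$ the set $\mathbf B_X$ contains exactly one ball of radius $r$.
   Context: $\operatorname{Sp}(X)=\{d(x,y):x,y\in X,\ x\neq y\}$; $\mathfrak U$ is the class of finite ultrametric spaces $X$ with $|\operatorname{Sp}(X)|=|X|-1$. For $t\in X$ and $r\ge0$, $B_r(t)=\{x\in X: d(x,t)\leqslant r\}$; $\operatorname{Sp}_t(X)=\{d(x,t):x\in X,\ x\neq t\}$; $\mathbf B_X=\{B_r(t): t\in X,\ r\in\operatorname{Sp}_t(X)\}$. A ball of radius $r$ in $\mathbf B_X$ means a set $B_r(t)$ with $t\in X$ and $r\in\operatorname{Sp}_t(X)$. *)

From HB Require Import structures.
From mathcomp Require Import all_boot all_order all_algebra.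
From mathcomp Require Import reals.
Set Implicit Arguments. Unset Strict Implicit. Unset Printing Implicit Defensive.
Import Order.TTheory GRing.Theory Num.Theory.
Local Open Scope ring_scope.

Section Ultra.
Variables (R : realType) (T : finType) (d : T -> T -> R).

Definition ultrametric : Prop :=
  [/\ forall x y, 0 <= d x y,
      forall x y, d x y = 0 <-> x = y,
      forall x y, d x y = d y x
    & forall x y z, d x z <= Num.max (d x y) (d y z)].

Definition Sp : seq R :=
  undup [seq d p.1 p.2 | p <- enum [pred p : T * T | p.1 != p.2]].

Definition Spt (t : T) : seq R :=
  undup [seq d x t | x <- enum [pred x : T | x != t]].

Definition ball (t : T) (r : R) : {set T} := [set x | d x t <= r].

Definition in_classU : Prop := ultrametric /\ size Sp = (#|T| - 1)%N.

Definition is_ball_of_radius (B : {set T}) (r : R) : Prop :=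
  exists t : T, r \in Spt t /\ B = ball t r.

End Ultra.

From mathcomp Require Import all_boot all_order all_algebra.
From mathcomp Require Import reals.
Set Implicit Arguments. Unset Strict Implicit. Unset Printing Implicit Defensive.
Import Order.TTheory GRing.Theory Num.Theory.
Local Open Scope ring_scope.

(* Number the points of X and attach to every point x other than the first its
   gap: the least distance from x to an earlier point.  Every distance r of X
   is a gap, and more precisely every ball of radius r in B_X contains a point
   of gap r (the second point at distance r from the first point of the ball).
   Two distinct balls of radius r would be disjoint, so the |X| - 1 gaps would
   repeat a value and |Sp(X)| < |X| - 1. *)

Lemma uniq_size_lt_card_image (T : finType) (U : eqType) (f : T -> U)
    (A : {set T}) (s : seq U) (i j : T) :
  uniq s -> {subset s <= [seq f x | x in A]} ->
  i \in A -> j \in A -> i != j -> f i = f j -> (size s < #|A|)%N.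
Proof.
move=> s_uniq s_sub iA jA ij fij.
have sub : {subset s <= [seq f x | x in A :\ j]}.
  move=> u /s_sub /imageP[x xA ->]; apply/imageP.
  have [xj | xj] := eqVneq x j; last by exists x; rewrite // in_setD1 xj.
  by exists i; rewrite ?in_setD1 ?ij // xj fij.
rewrite (cardsD1 j A) jA add1n ltnS.
by apply: leq_trans (uniq_leq_size s_uniq sub) _; rewrite size_map -cardE.
Qed.

Section Ultrametric.
Variables (R : realType) (T : finType) (d : T -> T -> R).
Hypothesis d_ultra : ultrametric d.

Lemma dC x y : d x y = d y x.
Proof. by case: d_ultra. Qed.

Lemma d_ge0 x y : 0 <= d x y.
Proof. by case: d_ultra. Qed.

Lemma d_eq0 x y : (d x y == 0) = (x == y).
Proof. by case: d_ultra => _ d0 _ _; apply/eqP/eqP => /d0. Qed.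

Lemma dxx x : d x x = 0.
Proof. by apply/eqP; rewrite d_eq0. Qed.

Lemma d_le_max x y z : d x z <= Num.max (d x y) (d y z).
Proof. by case: d_ultra. Qed.

Lemma d_le_trans x y z r : d x y <= r -> d y z <= r -> d x z <= r.
Proof. by move=> dxy dyz; rewrite (le_trans (d_le_max x y z)) // ge_max dxy. Qed.

Lemma mem_ball t r x : (x \in ball d t r) = (d x t <= r).
Proof. by rewrite inE. Qed.

Lemma ball_center t r : 0 <= r -> t \in ball d t r.
Proof. by rewrite mem_ball dxx. Qed.

Lemma ball_le t r x y : x \in ball d t r -> y \in ball d t r -> d x y <= r.
Proof. by rewrite !mem_ball => xt yt; apply: d_le_trans xt _; rewrite dC. Qed.

Lemma eq_ball_mem t1 t2 r : t1 \in ball d t2 r -> ball d t1 r = ball d t2 r.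
Proof.
rewrite mem_ball => t12; apply/setP => x; rewrite !mem_ball.
apply/idP/idP => [/d_le_trans-> // | /d_le_trans->//]; by rewrite dC.
Qed.

Lemma eq_ball_meet t1 t2 r x :
  x \in ball d t1 r -> x \in ball d t2 r -> ball d t1 r = ball d t2 r.
Proof.
by move=> x1 x2; rewrite -(eq_ball_mem x1) -(eq_ball_mem x2).
Qed.

Lemma mem_Sp r : r \in Sp d -> exists a b, a != b /\ d a b = r.
Proof. by rewrite mem_undup => /mapP[[a b]]; rewrite mem_enum => ab ->; exists a, b. Qed.

Lemma mem_Spt t r : r \in Spt d t -> exists2 x, x != t & d x t = r.
Proof. by rewrite mem_undup => /mapP[x]; rewrite mem_enum => xt ->; exists x. Qed.

Lemma Spt_Sp t r : r \in Spt d t -> r \in Sp d.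
Proof.
case/mem_Spt=> x xt <-; rewrite mem_undup; apply/mapP.
by exists (x, t); rewrite ?mem_enum.
Qed.

Section Numbering.
Variable rk : T -> nat.
Hypothesis rk_inj : injective rk.

Definition gap_is (x : T) (r : R) : bool :=
  [exists y, (rk y < rk x)%N && (d x y == r)] &&
  [forall y, (rk y < rk x)%N ==> (r <= d x y)].

Lemma gap_is_uniq x r1 r2 : gap_is x r1 -> gap_is x r2 -> r1 = r2.
Proof.
case/andP=> /existsP[y1 /andP[y1x /eqP <-]] /forallP min1.
case/andP=> /existsP[y2 /andP[y2x /eqP <-]] /forallP min2.
by apply/eqP; rewrite eq_le (implyP (min1 y2)) ?(implyP (min2 y1)).
Qed.

(* The default [0] is only reached by the first point, which has no gap. *)
Definition gap (x : T) : R := head 0 [seq r <- Sp d | gap_is x r].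

Lemma gapE x r : r \in Sp d -> gap_is x r -> gap x = r.
Proof.
move=> r_Sp xr; rewrite /gap.
have : r \in [seq r <- Sp d | gap_is x r] by rewrite mem_filter xr.
case: [seq r <- Sp d | gap_is x r] (filter_all (gap_is x) (Sp d)) => //= r' s.
by case/andP=> xr' _ _; apply: gap_is_uniq xr' xr.
Qed.

Definition nonfirst : {set T} := [set x | [exists y, (rk y < rk x)%N]].

Lemma gap_is_nonfirst x r : gap_is x r -> x \in nonfirst.
Proof. by case/andP=> /existsP[y /andP[yx _]] _; rewrite inE; apply/existsP; exists y. Qed.

Lemma card_nonfirst_lt (x0 : T) : (#|nonfirst| < #|T|)%N.
Proof.
rewrite -cardsT; apply: proper_card; rewrite properT.
have [m _ m_min] := arg_minnP rk (isT : predT x0).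
apply/eqP => /setP/(_ m); rewrite !inE => /existsP[y].
by rewrite ltnNge m_min.
Qed.

(* Let c be the first point of the ball and i the first point of the ball at
   distance r from c.  Earlier points inside the ball are closer than r to c,
   earlier points outside the ball are farther than r from everything in it. *)
Lemma gap_first_far t r c i :
  c \in ball d t r -> {in ball d t r, forall y, (rk c <= rk y)%N} ->
  i \in ball d t r -> d i c = r ->
  {in ball d t r, forall y, d y c = r -> (rk i <= rk y)%N} ->
  0 < r -> gap_is i r.
Proof.
move=> cB c_min iB ic i_min r_gt0.
have ci_rk : (rk c < rk i)%N.
  rewrite ltn_neqAle c_min // andbT; apply/eqP => /rk_inj ci.
  by move: r_gt0; rewrite -ic ci dxx ltxx.
apply/andP; split; first by apply/existsP; exists c; rewrite ci_rk ic eqxx.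
apply/forallP => y; apply/implyP => yi.
have [yB | yNB] := boolP (y \in ball d t r).
  have yc : d y c < r.
    rewrite lt_neqAle (ball_le yB cB) andbT; apply/eqP => yc.
    by move: yi; rewrite ltnNge i_min.
  rewrite leNgt; apply/negP => iy.
  by move: (d_le_max i y c); rewrite ic leNgt gt_max iy yc.
have yt : r < d y t by rewrite mem_ball -ltNge in yNB.
have := lt_le_trans yt (d_le_max y i t).
rewrite lt_max => /orP[yi_gt | it_gt]; first by rewrite dC ltW.
by move: iB; rewrite mem_ball leNgt it_gt.
Qed.

Lemma gap_in_ball t r a b :
  a \in ball d t r -> b \in ball d t r -> a != b -> d a b = r ->
  exists2 x, x \in ball d t r & gap_is x r.
Proof.
move=> aB bB ab ab_r.
have r_gt0 : 0 < r by rewrite -ab_r lt_def d_eq0 ab d_ge0.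
have [c cB c_min] := arg_minnP rk aB.
have far : exists y, (y \in ball d t r) && (d y c == r).
  have := d_le_max a c b; rewrite ab_r le_max => /orP[ra | rb].
    by exists a; rewrite aB eq_le (ball_le aB cB).
  by exists b; rewrite bB eq_le dC (ball_le cB bB).
have [y yB] := far.
have [i /andP[iB /eqP ic] i_min] :=
  arg_minnP (P := fun y => (y \in ball d t r) && (d y c == r)) rk yB.
exists i => //; apply: gap_first_far cB c_min iB ic _ r_gt0.
by move=> z zB zc; apply: i_min; rewrite zB zc eqxx.
Qed.

Lemma gap_in_Spt_ball t r : r \in Spt d t -> exists2 x, x \in ball d t r & gap_is x r.
Proof.
case/mem_Spt=> x xt <-.
by apply: gap_in_ball (ball_center _ (d_ge0 x t)) xt erefl; rewrite mem_ball.
Qed.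

Lemma Sp_sub_gap : {subset Sp d <= [seq gap x | x in nonfirst]}.
Proof.
move=> r r_Sp; have [a [b [ab ab_r]]] := mem_Sp r_Sp.
have aB : a \in ball d b r by rewrite mem_ball ab_r.
have bB : b \in ball d b r by rewrite -ab_r ball_center ?d_ge0.
have [x _ xr] := gap_in_ball aB bB ab ab_r.
by apply/imageP; exists x; rewrite ?(gap_is_nonfirst xr) ?(gapE r_Sp xr).
Qed.

Lemma Spt_balls_eq t1 t2 r :
  size (Sp d) = (#|T| - 1)%N -> r \in Spt d t1 -> r \in Spt d t2 ->
  ball d t1 r = ball d t2 r.
Proof.
move=> Sp_size r1 r2; have r_Sp := Spt_Sp r1.
have [x1 x1B g1] := gap_in_Spt_ball r1.
have [x2 x2B g2] := gap_in_Spt_ball r2.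
have [x12 | x12] := eqVneq x1 x2; first by apply: eq_ball_meet x1B _; rewrite x12.
have := uniq_size_lt_card_image (undup_uniq _) Sp_sub_gap
  (gap_is_nonfirst g1) (gap_is_nonfirst g2) x12.
rewrite (gapE r_Sp g1) (gapE r_Sp g2) Sp_size => /(_ erefl).
have := card_nonfirst_lt x1; case: #|T| => [//|n]; rewrite subn1 ltnS.
by move=> k_le /(leq_ltn_trans k_le); rewrite ltnn.
Qed.

End Numbering.
End Ultrametric.

Theorem lemma22 (R : realType) (T : finType) (d : T -> T -> R) :
  in_classU d ->
  forall r : R, r \in Sp d ->
  exists! B : {set T}, is_ball_of_radius d B r.
Proof.
case=> d_ultra Sp_size r r_Sp.
have [a [b [ab ab_r]]] := mem_Sp r_Sp.
have rb : r \in Spt d b.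
  by rewrite mem_undup; apply/mapP; exists a; rewrite ?mem_enum.
have rk_inj : injective (fun x : T => nat_of_ord (enum_rank x)).
  by move=> x y /val_inj/enum_rank_inj.
exists (ball d b r); split; first by exists b.
move=> _ [t [rt ->]].
exact: (Spt_balls_eq d_ultra rk_inj Sp_size rb rt).
Qed.
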